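(* Let $\mathcal{A},\widetilde{\mathcal{A}}$ be finite alphabets, $\pi:\mathcal{A}\to\widetilde{\mathcal{A}}$ a map, $D\geq1$, $\mathcal{F}\subseteq\mathcal{A}^{[\![1,D]\!]^2}$, $R\geq D$, and $M\subseteq\mathcal{A}^{[\![1,R]\!]^2}$ the set of locally $\mathcal{F}$-admissible patterns of size $R$. Assume that every $w\in M$ is vertically aligned after projection: $\pi(w(i,j))=\pi(w(i,j'))$ for all $i,j,j'\in[\![1,R]\!]$. Let $\mu$ be an ergodic shift-invariant probability measure with $\mu(\Sigma^2(\mathcal{A})\setminus[M])\leq\epsilon$ for some $\epsilon\in[0,1/2]$. Let $\widetilde{\mathcal{G}}=\{\widetilde G_a:a\in\widetilde{\mathcal{A}}\}$ with $\widetilde G_a=\{x:\pi(x(0))=a\}$ and $\mathcal{U}=\{[M],\Sigma^2(\mathcal{A})\setminus[M]\}$. Then (1) $\limsup_{n\to\infty}\frac{1}{n^2}H\big(\mathcal{U}^{[\![0,n-R]\!]^2},\mu\big)\leq H(\epsilon)$; (2) $\limsup_{n\to\infty}\frac{1}{n^2}H\big(\widetilde{\mathcal{G}}^{[\![1,n]\!]^2}\mid\mathcal{U}^{[\![0,n-R]\!]^2},\mu\big)\leq\big(\frac{8}{R}+\epsilon\big)\ln(\mathrm{card}(\widetilde{\mathcal{A}}))$, where $H(\epsilon)=-\epsilon\ln\epsilon-(1-\epsilon)\ln(1-\epsilon)$ (with $H(0)=0$).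
   Context: A pattern $w\in\mathcal{A}^{[\![1,R]\!]^2}$ is locally $\mathcal{F}$-admissible if $(\sigma^u w)|_{[\![1,D]\!]^2}\notin\mathcal{F}$ for all $u\in[\![0,R-D]\!]^2$, where $\sigma^u(w)(v)=w(u+v)$. $[M]=\{x\in\mathcal{A}^{\mathbb{Z}^2}:x|_{[\![1,R]\!]^2}\in M\}$. For a partition $\mathcal{P}$ and finite $S\subseteq\mathbb{Z}^2$, $\mathcal{P}^S=\bigvee_{u\in S}\sigma^{-u}\mathcal{P}$; $H(\mathcal{P},\mu)=-\sum_{P}\mu(P)\ln\mu(P)$ and $H(\mathcal{P}\mid\mathcal{Q},\mu)$ is the conditional entropy. *)

From HB Require Import structures.
From mathcomp Require Import all_boot all_order all_algebra.
From mathcomp Require Import all_classical all_reals all_analysis.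
Set Implicit Arguments.
Unset Strict Implicit.
Unset Printing Implicit Defensive.
Import Order.TTheory GRing.Theory Num.Theory.
Local Open Scope classical_set_scope.
Local Open Scope ring_scope.

(* Configurations of the full shift Sigma^2(A) = A^{Z^2}.  The extra
   element a0 only serves to equip the type with a pointed structure,
   required by MathComp-Analysis measurable types. *)
Definition cfg (A : finType) (a0 : A) : pointedType :=
  HB.pack (int * int -> A)%type (Choice.on (int * int -> A)%type)
    (isPointed.Build (int * int -> A)%type (fun _ => a0)).

Definition cyl (A : finType) (a0 : A) : set (set (@cfg A a0)) :=
  [set E | exists (u : int * int) (a : A), E = [set x | x u = a]].

Definition Sigma2 (A : finType) (a0 : A) := g_sigma_algebraType (@cyl A a0).

Definition shift (A : Type) (u : int * int) (x : int * int -> A) : int * int -> A :=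
  fun v => x (u.1 + v.1, u.2 + v.2).

Definition shift_invariant (A : finType) (a0 : A) (RR : realType)
  (mu : probability (Sigma2 a0) RR) : Prop :=
  forall (u : int * int) (E : set (Sigma2 a0)), measurable E ->
    mu ((shift u) @^-1` E) = mu E.

Definition ergodic (A : finType) (a0 : A) (RR : realType)
  (mu : probability (Sigma2 a0) RR) : Prop :=
  forall E : set (Sigma2 a0), measurable E ->
    (forall u : int * int, (shift u) @^-1` E = E) ->
    mu E = 0%E \/ mu E = 1%E.

(* A pattern on [[1,N]]^2 is encoded as a finite function on 'I_N * 'I_N,
   the ordinal k standing for the coordinate k+1. *)
Lemma ord_shift_proof (R D a : nat) (H : (a + D <= R)%N) (i : 'I_D) :
  (a + i < R)%N.
Proof. by apply: leq_trans H; rewrite ltn_add2l. Qed.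

Definition ord_shift (R D a : nat) (H : (a + D <= R)%N) (i : 'I_D) : 'I_R :=
  Ordinal (ord_shift_proof H i).

Definition loc_adm (A : finType) (D R : nat) (F : {set {ffun 'I_D * 'I_D -> A}})
  (w : {ffun 'I_R * 'I_R -> A}) : Prop :=
  forall (a b : nat) (Ha : (a + D <= R)%N) (Hb : (b + D <= R)%N),
    [ffun v : 'I_D * 'I_D => w (ord_shift Ha v.1, ord_shift Hb v.2)] \notin F.

Definition restr (A : Type) (R : nat) (x : int * int -> A)
  : {ffun 'I_R * 'I_R -> A} :=
  [ffun k : 'I_R * 'I_R => x ((k.1.+1)%:Z, (k.2.+1)%:Z)].

Definition cylM (A : finType) (D R : nat) (F : {set {ffun 'I_D * 'I_D -> A}})
  : set (int * int -> A) :=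
  [set x | loc_adm F (restr R x)].

(* A finite partition is given by a labelling map f : T -> L; its cells are
   the fibres f^{-1}(l) (empty fibres contribute 0). *)
Definition xlnx (RR : realType) (t : RR) : RR := if t == 0 then 0 else t * ln t.

Definition part_entropy (T : Type) (RR : realType) (mu : set T -> \bar RR)
  (L : finType) (f : T -> L) : RR :=
  - \sum_(l : L) xlnx (fine (mu (f @^-1` [set l]))).

Definition cond_entropy (T : Type) (RR : realType) (mu : set T -> \bar RR)
  (L K : finType) (f : T -> L) (g : T -> K) : RR :=
  - \sum_(l : L) \sum_(k : K)
      (let p := fine (mu (f @^-1` [set l] `&` g @^-1` [set k])) in
       let q := fine (mu (g @^-1` [set k])) in
       if p == 0 then 0 else p * ln (p / q)).

(* P^S = \/_{u in S} sigma^{-u} P, for a finite index set S embedded in Z^2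
   by toZ : the label of x is (f (sigma^u x))_{u in S} *)
Definition part_join (A : Type) (L S : finType) (toZ : S -> int * int)
  (f : (int * int -> A) -> L) (x : int * int -> A) : {ffun S -> L} :=
  [ffun s : S => f (shift (toZ s) x)].

(* [[0, n-R]]^2, indexed by 'I_(n+1-R) * 'I_(n+1-R) (empty if n < R) *)
Definition box0 (n R : nat) := ('I_(n.+1 - R) * 'I_(n.+1 - R))%type.
Definition box0Z (n R : nat) (s : box0 n R) : int * int := ((s.1 : nat)%:Z, (s.2 : nat)%:Z).

Definition box1 (n : nat) := ('I_n * 'I_n)%type.
Definition box1Z (n : nat) (s : box1 n) : int * int := (((s.1 : nat).+1)%:Z, ((s.2 : nat).+1)%:Z).

Definition labU (A : finType) (D R : nat) (F : {set {ffun 'I_D * 'I_D -> A}})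
  (x : int * int -> A) : bool := `[< cylM R F x >].

Definition labG (A At : Type) (pi : A -> At) (x : int * int -> A) : At := pi (x (0, 0)).

Definition Hbin (RR : realType) (e : RR) : RR := - xlnx e - xlnx (1 - e).

From Pilot Require Import Defs.
From HB Require Import structures.
From mathcomp Require Import all_boot all_order all_algebra.
From mathcomp Require Import all_classical all_reals all_analysis.
From mathcomp Require Import zify lra ring.
Import Order.TTheory GRing.Theory Num.Theory.
Local Open Scope classical_set_scope.
Local Open Scope ring_scope.
Set Implicit Arguments. Unset Strict Implicit. Unset Printing Implicit Defensive.

(* (1) By shift invariance, each coordinate of the [U]-labelling of the box
   [[0,n-R]]^2 is "inadmissible" with probability beta = mu(~[M]) <= eps.
   Gibbs' inequality against the product of Bernoulli(eps) laws bounds the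
   joint entropy by the number of coordinates times the cross entropy
   -((1-beta) ln(1-eps) + beta ln eps), which is at most H(eps) since
   beta <= eps <= 1/2.
   (2) On an admissible window the projected configuration is constant along
   columns, so given the [U]-labelling the [G]-labelling of [[1,n]]^2 is
   determined by its values on the sites not covered (together with the site
   below them) by an admissible window.  The conditional entropy is thus at
   most ln #|At| times the expected number of uncovered sites.  Off the bottom
   row, a site is uncovered only if one fixed window containing it is
   inadmissible, an event of probability beta; this gives n + beta n^2 <=
   (8/R + eps) n^2. *)

Lemma limn_esup_le_eventually (RR : realType) (u : nat -> \bar RR) (c : \bar RR) N :
  (forall n, (N <= n)%N -> (u n <= c)%E) -> (limn_esup u <= c)%E.
Proof.
move=> uc; apply: (@le_trans _ _ (ereal_sup (u @` [set k | (N <= k)%N]))).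
  by apply: ereal_inf_lbound; exists [set k | (N <= k)%N] => //; exists N.
by apply: ub_ereal_sup => _ [k /= Nk <-]; exact: uc.
Qed.

Lemma measure_sum_fibers d (T : measurableType d) (RR : realType)
    (mu : {measure set T -> \bar RR}) (K : finType) (h : T -> K) (E : set T) (B : pred K) :
  measurable E -> (forall k, measurable (h @^-1` [set k])) ->
  (\sum_(k | B k) mu (h @^-1` [set k] `&` E) = mu (h @^-1` [set k | B k] `&` E))%E.
Proof.
move=> mE mh; rewrite [LHS](bigfs _ (index_enum_uniq K)); last first.
  by move=> k _; rewrite mem_index_enum.
rewrite -measure_fin_bigcup //.
- congr (mu _); apply/seteqP; split => [x [k /= Bk [hk Ex]]|x /= [Bx Ex]].
    by rewrite hk.
  by exists (h x).
- by move=> i j _ _ [x [[/= hi _] [/= hj _]]]; rewrite -hi -hj.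
- by move=> k _; exact: measurableI.
Qed.

Section Entropy.
Variable RR : realType.
Implicit Types p q x y e : RR.

Lemma xlnxE x : xlnx x = x * ln x.
Proof. by rewrite /xlnx; case: eqP => [->|]; rewrite ?mul0r. Qed.

Lemma ln_le_subr1 y : 0 < y -> ln y <= y - 1.
Proof.
move=> y0; have := @le_ln1Dx RR (y - 1).
rewrite addrCA subrr addr0; apply; rewrite ltrBrDl; lra.
Qed.

Lemma oppr_xlnx_le p q : 0 <= p -> 0 <= q -> (0 < p -> 0 < q) ->
  - xlnx p <= - (p * ln q) + q - p.
Proof.
move=> p0 q0 pq; rewrite xlnxE; have [->|pp] := eqVneq p 0; first by lra.
have {}pp : 0 < p by rewrite lt_def pp.
have qp := pq pp.
have := ler_wpM2l p0 (ln_le_subr1 (divr_gt0 qp pp)).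
rewrite ln_div ?posrE // !mulrBr mulr1 mulrCA divff ?gt_eqF // mulr1.
lra.
Qed.

Lemma gibbs_inequality (I : finType) (p q : I -> RR) :
  (forall i, 0 <= p i) -> (forall i, 0 <= q i) -> (forall i, 0 < p i -> 0 < q i) ->
  \sum_i q i <= \sum_i p i ->
  - \sum_i xlnx (p i) <= - \sum_i p i * ln (q i).
Proof.
move=> p0 q0 pq qp; rewrite -!sumrN.
apply: (le_trans (ler_sum _ (fun i _ => oppr_xlnx_le (p0 i) (q0 i) (@pq i)))).
rewrite !big_split /= !sumrN; lra.
Qed.

Lemma ln_prod (I : Type) (r : seq I) (P : pred I) (F : I -> RR) :
  (forall i, P i -> 0 < F i) ->
  ln (\prod_(i <- r | P i) F i) = \sum_(i <- r | P i) ln (F i).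
Proof.
move=> F0; suff [] : 0 < \prod_(i <- r | P i) F i /\
                     ln (\prod_(i <- r | P i) F i) = \sum_(i <- r | P i) ln (F i) by [].
apply: (big_ind2 (fun a b => 0 < a /\ ln a = b)) => [|x1 x2 y1 y2 [x0 <-] [y0 <-]|i Pi].
- by rewrite ln1.
- by rewrite lnM ?posrE ?mulr_gt0.
- by split; [exact: F0|].
Qed.

(* Gibbs' inequality against the uniform distribution on the support of [p]. *)
Lemma entropy_le_ln_card_support (L : finType) (p : L -> RR) q :
  (forall l, 0 <= p l) -> q = \sum_l p l ->
  - \sum_l (if p l == 0 then 0 else p l * ln (p l / q))
    <= q * ln #|[set l | p l != 0]%SET|%:R.
Proof.
move=> p0 qE; set N := #|_|.
have [q0|qn0] := eqVneq q 0.
  have pl0 := psumr_eq0P (fun l _ => p0 l) (etrans (esym qE) q0).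
  by rewrite big1 ?oppr0 ?q0 ?mul0r // => l _; rewrite pl0 ?eqxx.
have qp : 0 < q by rewrite lt_def qn0 qE sumr_ge0.
have [l0 pl0] : exists l, p l != 0.
  apply/existsP; apply: contraNT qn0; rewrite negb_exists qE => /forallP pl.
  by apply/eqP/big1 => l _; apply/eqP; move: (pl l); rewrite negbK.
have Np : 0 < N%:R :> RR by rewrite ltr0n; apply/card_gt0P; exists l0; rewrite inE.
pose r l := if p l != 0 then q / N%:R else 0.
have rp l : 0 < p l -> 0 < r l by rewrite /r => /lt0r_neq0 ->; rewrite divr_gt0.
have sr : \sum_l r l = q.
  rewrite /r -big_mkcond /= sumr_const (_ : #|_| = N); last first.
    by rewrite /N; apply: eq_card => l; rewrite inE.
  by rewrite -[_ *+ N]mulr_natr divfK ?gt_eqF.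
have r0 l : 0 <= r l by rewrite /r; case: ifP => _ //; rewrite ltW // divr_gt0.
have gibbs : - \sum_l xlnx (p l) <= - \sum_l p l * ln (r l).
  by apply: gibbs_inequality => //; rewrite sr qE.
have E1 l : (if p l == 0 then 0 else p l * ln (p l / q)) = xlnx (p l) - p l * ln q.
  rewrite xlnxE; case: eqP => [->|/eqP pl]; first by rewrite !mul0r subrr.
  have plp : 0 < p l by rewrite lt_def pl p0.
  by rewrite ln_div ?posrE // mulrBr.
have E2 l : p l * ln (r l) = p l * ln q - p l * ln N%:R.
  rewrite /r; case: eqP => [->|_] /=; first by rewrite !mul0r subrr.
  by rewrite ln_div ?posrE // mulrBr.
rewrite (eq_bigr _ (fun l _ => E2 l)) in gibbs; rewrite (eq_bigr _ (fun l _ => E1 l)).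
rewrite !sumrB -!mulr_suml -qE in gibbs *; lra.
Qed.

Lemma Hbin_ge0 e : 0 <= e <= 1 -> 0 <= Hbin e.
Proof.
move=> /andP[e0 e1]; rewrite /Hbin !xlnxE.
have h1 : e * ln e <= 0 by rewrite mulr_ge0_le0 // ln_le0.
have h2 : (1 - e) * ln (1 - e) <= 0 by rewrite mulr_ge0_le0 ?ln_le0; lra.
lra.
Qed.

Lemma bernoulli_cross_entropy_le b e : 0 <= b <= e -> e <= 1 / 2 ->
  - ((1 - b) * ln (1 - e) + b * ln e) <= Hbin e.
Proof.
move=> /andP[b0 be] e12.
have lnle : ln e <= ln (1 - e).
  have [->|en0] := eqVneq e 0; first by rewrite ln0 // subr0 ln1.
  by rewrite ler_ln ?posrE; lra.
have : 0 <= (e - b) * (ln (1 - e) - ln e) by apply: mulr_ge0; lra.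
rewrite /Hbin !xlnxE mulrBr !mulrBl; lra.
Qed.

Lemma sum_prod_bernoulli (S : finType) e :
  \sum_(w : {ffun S -> bool}) \prod_s (if w s then 1 - e else e) = 1.
Proof.
rewrite -(bigA_distr_bigA (fun _ (b : bool) => if b then 1 - e else e)) /=.
by apply: big1 => s _; rewrite big_bool /= subrK.
Qed.

End Entropy.

Section Labellings.
Context d (T : measurableType d) (RR : realType) (mu : probability T RR).
Implicit Types E : set T.

Definition prob E : RR := fine (mu E).

Lemma prob_ge0 E : 0 <= prob E.
Proof. exact/fine_ge0/measure_ge0. Qed.

Lemma fin_num_prob E : measurable E -> mu E \is a fin_num.
Proof.
move=> mE; rewrite ge0_fin_numE ?measure_ge0 //.
by apply: (le_lt_trans (probability_le1 mu mE)); rewrite ltry.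
Qed.

Section Fibers.
Variables (K : finType) (h : T -> K).
Hypothesis mh : forall k, measurable (h @^-1` [set k]).

Lemma prob_sum_fibersI E (B : pred K) : measurable E ->
  \sum_(k | B k) prob (h @^-1` [set k] `&` E) = prob (h @^-1` [set k | B k] `&` E).
Proof.
move=> mE; rewrite /prob sum_fine ?measure_sum_fibers // => k _.
exact/fin_num_prob/measurableI.
Qed.

Lemma prob_sum_fibers (B : pred K) :
  \sum_(k | B k) prob (h @^-1` [set k]) = prob (h @^-1` [set k | B k]).
Proof.
have := prob_sum_fibersI B (@measurableT _ T).
by rewrite setIT; under eq_bigr do rewrite setIT.
Qed.

Lemma prob_sum_fibers1 : \sum_k prob (h @^-1` [set k]) = 1.
Proof.
rewrite prob_sum_fibers (_ : _ @^-1` _ = setT); first by rewrite /prob probability_setT.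
by apply/seteqP; split.
Qed.

End Fibers.

Lemma cond_entropy_le_ln_card_support (L K : finType) (g : T -> L) (h : T -> K) :
  (forall l, measurable (g @^-1` [set l])) -> (forall k, measurable (h @^-1` [set k])) ->
  cond_entropy mu g h <= \sum_k prob (h @^-1` [set k]) *
    ln #|[set l | prob (g @^-1` [set l] `&` h @^-1` [set k]) != 0]%SET|%:R.
Proof.
move=> mg mh; rewrite /cond_entropy exchange_big /= -sumrN; apply: ler_sum => k _.
apply: entropy_le_ln_card_support => [l|]; first exact: prob_ge0.
rewrite prob_sum_fibersI //=; congr prob.
by apply/seteqP; split => x //= [].
Qed.

End Labellings.

Section Cylinders.
Variables (A : finType) (a0 : A).

Lemma measurable_cyl (u : int * int) (a : A) :
  measurable ([set x | x u = a] : set (Sigma2 a0)).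
Proof. by apply: sub_gen_smallest; exists u, a. Qed.

Lemma measurable_local (S : finType) (toZ : S -> int * int) (P : (int * int -> A) -> Prop) :
  (forall x y, (forall s, x (toZ s) = y (toZ s)) -> P x -> P y) ->
  measurable ([set x | P x] : set (Sigma2 a0)).
Proof.
move=> HP; pose pat x : {ffun S -> A} := [ffun s => x (toZ s)].
have -> : [set x | P x] =
    \big[setU/set0]_(phi <- enum {ffun S -> A} | `[< exists2 y, P y & pat y = phi >])
      \big[setI/setT]_(s <- enum S) ([set x | x (toZ s) = phi s] : set (Sigma2 a0)).
  apply/seteqP; split => x /=.
    move=> Px; rewrite -bigcup_seq_cond; exists (pat x).
      by rewrite /= mem_enum; apply/asboolP; exists x.
    by rewrite -bigcap_seq => s _ /=; rewrite ffunE.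
  rewrite -bigcup_seq_cond => -[phi /= /andP[_ /asboolP[y Py <-]]].
  rewrite -bigcap_seq => xy; apply: HP Py => s.
  by have := xy s; rewrite /= mem_enum ffunE => ->.
apply: bigsetU_measurable => phi _; apply: bigsetI_measurable => s _.
exact: measurable_cyl.
Qed.

End Cylinders.

Section Admissibility.
Variables (RR : realType) (A : finType) (a0 : A) (D R : nat)
  (F : {set {ffun 'I_D * 'I_D -> A}}) (mu : probability (Sigma2 a0) RR).

Lemma measurable_labU_shift (u : int * int) (b : bool) :
  measurable ([set x | labU R F (Defs.shift u x) = b] : set (Sigma2 a0)).
Proof.
apply: (measurable_local (toZ := fun t : 'I_R * 'I_R => (u.1 + t.1.+1%:Z, u.2 + t.2.+1%:Z))).
move=> x y xy <-; rewrite /labU /cylM /=; congr (`[< loc_adm F _ >]).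
by apply/ffunP => t; rewrite !ffunE /Defs.shift xy.
Qed.

Lemma measurable_cylM : measurable (cylM R F : set (Sigma2 a0)).
Proof.
apply: (measurable_local (toZ := fun t : 'I_R * 'I_R => (t.1.+1%:Z, t.2.+1%:Z))) => x y xy.
by rewrite /= (_ : restr R x = restr R y) //; apply/ffunP => t; rewrite !ffunE.
Qed.

Let beta := prob mu (~` cylM R F).

Hypothesis mu_shift : shift_invariant mu.

Lemma prob_labU_shift_false (u : int * int) :
  prob mu [set x | labU R F (Defs.shift u x) = false] = beta.
Proof.
rewrite /beta /prob -(mu_shift u (measurableC measurable_cylM)); congr (fine (mu _)).
apply/seteqP; split => x /=; rewrite /labU.
  by move=> /negbT/asboolPn.
by move=> /asboolPn/negbTE.
Qed.

Definition labU_box n : Sigma2 a0 -> {ffun box0 n R -> bool} :=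
  part_join (@box0Z n R) (labU R F).

Lemma measurable_labU_box n k : measurable (labU_box n @^-1` [set k]).
Proof.
have -> : labU_box n @^-1` [set k] = \big[setI/setT]_(s <- enum {: box0 n R})
    [set x | labU R F (Defs.shift (box0Z s) x) = k s].
  apply/seteqP; split => x /=; rewrite -bigcap_seq.
    by move=> <- s _ /=; rewrite ffunE.
  by move=> xk; apply/ffunP => s; rewrite ffunE; apply: xk; rewrite /= mem_enum.
by apply: bigsetI_measurable => s _; exact: measurable_labU_shift.
Qed.

Lemma sum_prob_labU_box_false n (s : box0 n R) :
  \sum_(k : {ffun box0 n R -> bool} | ~~ k s) prob mu (labU_box n @^-1` [set k]) = beta.
Proof.
rewrite prob_sum_fibers; last exact: measurable_labU_box.
rewrite -(prob_labU_shift_false (box0Z s)); congr prob.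
by apply/seteqP; split => x /=; rewrite ffunE; [move/negbTE|move=> ->].
Qed.

Lemma prob_labU_box_le n (k : {ffun box0 n R -> bool}) s :
  ~~ k s -> prob mu (labU_box n @^-1` [set k]) <= beta.
Proof.
move=> ks; rewrite -(sum_prob_labU_box_false s) (bigD1 k) //= lerDl.
by apply: sumr_ge0 => *; exact: prob_ge0.
Qed.

Lemma part_entropy_labU_box_le n eps : 0 <= eps -> eps <= 1 / 2 -> beta <= eps ->
  part_entropy mu (labU_box n) <= #|{: box0 n R}|%:R * Hbin eps.
Proof.
move=> e0 e12 be.
pose p k := prob mu (labU_box n @^-1` [set k]).
pose wt (b : bool) := if b then 1 - eps else eps.
have p0 k : 0 <= p k by exact: prob_ge0.
have wt_gt0 k s : 0 < p k -> 0 < wt (k s).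
  rewrite /wt; case: ifP => ks pk; first lra.
  rewrite lt_def e0 andbT; apply: contraTneq pk => e00.
  have := prob_labU_box_le (negbT ks); rewrite -/(p k); lra.
have marg s : \sum_k p k * ln (wt (k s)) = (1 - beta) * ln (1 - eps) + beta * ln eps.
  rewrite (bigID (fun k : {ffun box0 n R -> bool} => k s)) /=.
  rewrite (eq_bigr (fun k => p k * ln (1 - eps))) => [|k ->//].
  rewrite [X in _ + X](eq_bigr (fun k => p k * ln eps)) => [|k /negbTE ->//].
  rewrite -!mulr_suml sum_prob_labU_box_false; congr (_ * _ + _).
  have := prob_sum_fibers1 mu (measurable_labU_box (n := n)).
  rewrite (bigID (fun k : {ffun box0 n R -> bool} => k s)) /= sum_prob_labU_box_false; lra.
have gibbs : part_entropy mu (labU_box n) <= - \sum_k p k * ln (\prod_s wt (k s)).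
  apply: gibbs_inequality => // [k|k pk|].
  - by apply: prodr_ge0 => s _; rewrite /wt; case: ifP => _; lra.
  - by apply: prodr_gt0 => s _; exact: wt_gt0.
  - by rewrite sum_prod_bernoulli prob_sum_fibers1 //; exact: measurable_labU_box.
have cross : \sum_k p k * ln (\prod_s wt (k s)) =
    #|{: box0 n R}|%:R * ((1 - beta) * ln (1 - eps) + beta * ln eps).
  transitivity (\sum_(s : box0 n R) \sum_k p k * ln (wt (k s))); last first.
    by rewrite (eq_bigr _ (fun s _ => marg s)) sumr_const mulr_natl.
  rewrite exchange_big; apply: eq_bigr => k _.
  have [->|pk] := eqVneq (p k) 0; first by rewrite mul0r big1 // => s _; rewrite mul0r.
  by rewrite ln_prod ?mulr_sumr // => s _; apply: wt_gt0; rewrite lt_def pk p0.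
apply: (le_trans gibbs); rewrite cross -mulrN; apply: ler_wpM2l => //.
by apply: bernoulli_cross_entropy_le => //; rewrite prob_ge0.
Qed.

Lemma entropy_rate_labU_box_le n eps :
  (0 < R)%N -> 0 <= eps -> eps <= 1 / 2 -> beta <= eps ->
  part_entropy mu (labU_box n) / n%:R ^+ 2 <= Hbin eps.
Proof.
move=> R0 e0 e12 be; have Hb0 : 0 <= Hbin eps by apply: Hbin_ge0; lra.
have [->|n0] := eqVneq n 0%N; first by rewrite expr0n /= invr0 mulr0.
rewrite ler_pdivrMr ?exprn_gt0 ?ltr0n ?lt0n // mulrC.
apply: (le_trans (part_entropy_labU_box_le n e0 e12 be)); apply: ler_wpM2r => //.
by rewrite -natrX ler_nat /box0 card_prod card_ord; nia.
Qed.

Variables (At : finType) (pi : A -> At).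

Definition labG_box n : Sigma2 a0 -> {ffun box1 n -> At} := part_join (@box1Z n) (labG pi).

Lemma labG_boxE n x (s : box1 n) : labG_box n x s = pi (x (s.1.+1%:Z, s.2.+1%:Z)).
Proof. by rewrite ffunE /labG /Defs.shift /= !addr0. Qed.

Lemma measurable_labG_box n l : measurable (labG_box n @^-1` [set l]).
Proof.
apply: (measurable_local (toZ := @box1Z n)) => x y xy <-.
by apply/ffunP => s; rewrite !labG_boxE; have := xy s; rewrite /box1Z => ->.
Qed.

(* [u] covers [s] when [s] and the site just below it both lie in the window
   [u + [[1,R]]^2] (ordinals are shifted by one with respect to sites). *)
Definition covers n (u : box0 n R) (s : box1 n) : bool :=
  [&& (u.1 <= s.1)%N, (s.1 < u.1 + R)%N, (u.2 < s.2)%N & (s.2 < u.2 + R)%N].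

Definition uncovered n (k : {ffun box0 n R -> bool}) : {set box1 n} :=
  [set s | ~~ [exists u, k u && covers u s]].

Definition down n (j : 'I_n) : 'I_n := Ordinal (leq_ltn_trans (leq_subr 1 j) (ltn_ord j)).

Hypothesis align : forall w : {ffun 'I_R * 'I_R -> A}, loc_adm F w ->
  forall i j j' : 'I_R, pi (w (i, j)) = pi (w (i, j')).

Lemma labG_box_down n x (u : box0 n R) (s : box1 n) :
  labU_box n x u -> covers u s -> labG_box n x s = labG_box n x (s.1, down s.2).
Proof.
rewrite ffunE /labU => /asboolP adm /and4P[? ? ? ?].
have i_lt : (s.1 - u.1 < R)%N by lia.
have j_lt : (s.2 - u.2 < R)%N by lia.
have j'_lt : (s.2 - 1 - u.2 < R)%N by lia.
have := align adm (Ordinal i_lt) (Ordinal j_lt) (Ordinal j'_lt).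
have shiftE (a b : nat) : (a <= b)%N -> a%:Z + (b - a).+1%:Z = b.+1%:Z.
  by move=> ab; rewrite -PoszD; congr Posz; lia.
by rewrite !ffunE /labG /Defs.shift /box0Z /= !addr0 !shiftE //; lia.
Qed.

Lemma labG_box_eq_on_uncovered n x y k : labU_box n x = k -> labU_box n y = k ->
  {in uncovered k, labG_box n x =1 labG_box n y} -> labG_box n x = labG_box n y.
Proof.
move=> xk yk xy; apply/ffunP => s.
elim: {s}(s.2 : nat) {-2}s (erefl (s.2 : nat)) => [|m IH] s sm.
  by apply: xy; rewrite inE; apply/existsP => -[u /andP[_ /and4P[_ _]]]; rewrite sm.
have [/xy//|] := boolP (s \in uncovered k).
rewrite inE negbK => /existsP[u /andP[ku cu]].
rewrite (labG_box_down _ cu) ?xk // (labG_box_down _ cu) ?yk //.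
by apply: IH => /=; rewrite sm subn1.
Qed.

Lemma card_support_labG_box_le n k :
  (#|[set l | prob mu (labG_box n @^-1` [set l] `&` labU_box n @^-1` [set k]) != 0%R]%SET|
    <= #|At| ^ #|uncovered k|)%N.
Proof.
set C := [set l | _]%SET.
pose restrict (l : {ffun box1 n -> At}) : {ffun {s | s \in uncovered k} -> At} :=
  [ffun t => l (val t)].
have realized l : l \in C -> exists2 x, labG_box n x = l & labU_box n x = k.
  rewrite inE => Cl; apply: contrapT => /forall2NP nx; move: Cl.
  rewrite (_ : _ `&` _ = set0) /prob ?measure0 ?eqxx //.
  by apply/seteqP; split => x //= [xl xk]; have [] := nx x.
have restrict_inj : {in C &, injective restrict}.
  move=> l1 l2 /realized[x1 <- x1k] /realized[x2 <- x2k] r12.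
  apply: labG_box_eq_on_uncovered x1k x2k _ => s sk.
  have := congr1 (fun r : {ffun {s | s \in uncovered k} -> At} => r (exist _ s sk)) r12.
  by rewrite !ffunE.
rewrite -(card_in_imset restrict_inj); apply: leq_trans (max_card _) _.
by rewrite card_ffun card_sig.
Qed.

Lemma cond_entropy_labG_box_le n : cond_entropy mu (labG_box n) (labU_box n) <=
  ln #|At|%:R * \sum_k prob mu (labU_box n @^-1` [set k]) * #|uncovered k|%:R.
Proof.
have At0 : (0 < #|At|)%N by apply/card_gt0P; exists (pi a0).
apply: le_trans
  (cond_entropy_le_ln_card_support _ (@measurable_labG_box n) (@measurable_labU_box n)) _.
rewrite mulr_sumr; apply: ler_sum => k _; rewrite mulrCA; apply: ler_wpM2l; first exact: prob_ge0.
set C := #|_|; have [->|C0] := eqVneq C 0%N.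
  by rewrite ln0 // mulr_ge0 // ln_ge0 // ler1n.
rewrite mulr_natr -lnXn ?ltr0n // -natrX ler_ln ?posrE ?ltr0n ?lt0n ?expn_gt0 ?At0 //.
  by rewrite ler_nat card_support_labG_box_le.
by rewrite -lt0n expn_gt0 At0.
Qed.

Lemma prob_uncovered_le n (s : box1 n) : (1 < R)%N -> (R <= n)%N -> (0 < s.2)%N ->
  \sum_(k | s \in uncovered k) prob mu (labU_box n @^-1` [set k]) <= beta.
Proof.
move=> R1 Rn s2; have := ltn_ord s.1; have := ltn_ord s.2 => s1n s2n.
have u1 : (minn s.1 (n - R) < n.+1 - R)%N by lia.
have u2 : (minn (s.2 - 1) (n - R) < n.+1 - R)%N by lia.
pose u : box0 n R := (Ordinal u1, Ordinal u2).
have cu : covers u s by apply/and4P; split => /=; lia.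
rewrite -(sum_prob_labU_box_false u) [leRHS]big_mkcond [leLHS]big_mkcond.
apply: ler_sum => k _.
case: ifP => [|_]; last by case: ifP => // _; exact: prob_ge0.
by rewrite inE => /existsPn/(_ u); rewrite cu andbT => /negbTE ->.
Qed.

Lemma expected_uncovered_le n : (1 < R)%N -> (R <= n)%N ->
  \sum_k prob mu (labU_box n @^-1` [set k]) * #|uncovered k|%:R <= n%:R + n%:R ^+ 2 * beta.
Proof.
move=> R1 Rn; pose p k := prob mu (labU_box n @^-1` [set k]).
have -> : \sum_k p k * #|uncovered k|%:R = \sum_(s : box1 n) \sum_(k | s \in uncovered k) p k.
  rewrite [RHS](exchange_big_dep xpredT) //=; apply: eq_bigr => k _.
  by rewrite sumr_const mulr_natr.
apply: (@le_trans _ _ (\sum_(s : box1 n) (((s.2 : nat) == 0%N)%:R + beta))).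
  apply: ler_sum => s _; case: posnP => s2; last by rewrite add0r prob_uncovered_le.
  apply: (@le_trans _ _ (\sum_k p k)).
    rewrite [leRHS](bigID (fun k => s \in uncovered k)) /= lerDl.
    by apply: sumr_ge0 => *; exact: prob_ge0.
  by rewrite prob_sum_fibers1 ?lerDl ?prob_ge0 //; exact: measurable_labU_box.
have bottom_row : \sum_(s : box1 n) ((s.2 : nat) == 0%N)%:R = n%:R :> RR.
  rewrite -(pair_bigA _ (fun _ (j : 'I_n) => ((j : nat) == 0%N)%:R)) /=.
  case: n {Rn p} => [|n]; first by rewrite big_ord0.
  rewrite (eq_bigr (fun=> 1)) ?sumr_const ?card_ord // => i _.
  by rewrite big_ord_recl /= big1 ?addr0.
rewrite big_split /= bottom_row sumr_const /box1 card_prod card_ord.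
by rewrite -[beta *+ _]mulr_natr natrM expr2 mulrC.
Qed.

Lemma cond_entropy_rate_labG_box_le n eps : (0 < R)%N -> (R <= n)%N -> beta <= eps ->
  cond_entropy mu (labG_box n) (labU_box n) / n%:R ^+ 2 <= (8 / R%:R + eps) * ln #|At|%:R.
Proof.
move=> R0 Rn be; pose X := \sum_k prob mu (labU_box n @^-1` [set k]) * #|uncovered k|%:R.
have lnAt0 : 0 <= ln #|At|%:R :> RR.
  by rewrite ln_ge0 // ler1n; apply/card_gt0P; exists (pi a0).
have beta0 : 0 <= beta by exact: prob_ge0.
have n0 : 0 < n%:R :> RR by rewrite ltr0n; lia.
suff : X <= (8 / R%:R + eps) * n%:R ^+ 2.
  move=> XB; rewrite ler_pdivrMr ?exprn_gt0 // -mulrA mulrCA.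
  by apply: le_trans (cond_entropy_labG_box_le n) _; rewrite ler_wpM2l.
have R8n : R%:R <= 8 * n%:R :> RR by rewrite -natrM ler_nat; lia.
have [R1|R1] := leqP R 1.
  have X_le : X <= n%:R ^+ 2.
    apply: (@le_trans _ _ (\sum_k prob mu (labU_box n @^-1` [set k]) * n%:R ^+ 2)).
      apply: ler_sum => k _; apply: ler_wpM2l; first exact: prob_ge0.
      by rewrite -natrX ler_nat (leq_trans (max_card _)) // card_prod card_ord.
    by rewrite -mulr_suml prob_sum_fibers1 ?mul1r //; exact: measurable_labU_box.
  have -> : R = 1%N by lia.
  have : 0 <= eps * n%:R ^+ 2 by rewrite mulr_ge0 // (le_trans beta0 be).
  rewrite divr1 mulrDl; nra.
apply: le_trans (expected_uncovered_le R1 Rn) _.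
have : n%:R <= 8 / R%:R * n%:R ^+ 2 :> RR.
  by rewrite mulrAC ler_pdivlMr ?ltr0n; [nra | lia].
nra.
Qed.

End Admissibility.

Theorem lemma2p4 (RR : realType) (A At : finType) (a0 : A) (pi : A -> At)
  (D : nat) (F : {set {ffun 'I_D * 'I_D -> A}}) (R : nat)
  (mu : probability (Sigma2 a0) RR) (eps : RR) :
  (1 <= D)%N -> (D <= R)%N ->
  (forall w : {ffun 'I_R * 'I_R -> A}, loc_adm F w ->
     forall i j j' : 'I_R, pi (w (i, j)) = pi (w (i, j'))) ->
  shift_invariant mu -> ergodic mu ->
  0 <= eps -> eps <= 1 / 2 ->
  (mu (~` cylM R F : set (Sigma2 a0)) <= eps%:E)%E ->
  (limn_esup (fun n : nat =>
      ((part_entropy mu (part_join (@box0Z n R) (labU R F))) / (n%:R ^+ 2))%:E)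
     <= (Hbin eps)%:E)%E
  /\
  (limn_esup (fun n : nat =>
      ((cond_entropy mu (part_join (@box1Z n) (labG pi))
                        (part_join (@box0Z n R) (labU R F))) / (n%:R ^+ 2))%:E)
     <= ((8 / R%:R + eps) * ln (#|At|%:R))%:E)%E.
Proof.
move=> D1 DR align mu_shift _ e0 e12 mu_inadm.
have R0 : (0 < R)%N := leq_trans D1 DR.
have beta_le : prob mu (~` cylM R F) <= eps.
  rewrite -lee_fin /prob fineK; first exact: mu_inadm.
  by apply/fin_num_prob/measurableC; exact: measurable_cylM.
split.
- apply: (limn_esup_le_eventually (N := 0)) => n _; rewrite lee_fin.
  exact: entropy_rate_labU_box_le.
- apply: (limn_esup_le_eventually (N := R)) => n Rn; rewrite lee_fin.
  exact: cond_entropy_rate_labG_box_le.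
Qed.
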